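(* Let $n \geq 4$, and let $\beta$ be an integer satisfying $-2 \leq 8\beta - 3n \leq 2$. Then for every $X \subseteq E(H_\beta)$, $$|X|(8\beta - 3n) + t(X) + n(n - 2\beta - 1)\left(2\beta - \frac{n}{2} + 1\right) \leq \frac{n^3}{16}.$$
   Context: Take $n$ vertices arranged in a circle. For distinct vertices $u,v$, $d(u,v) = 1 + |\{w: u,w,v \text{ distinct, in clockwise order}\}|$, and $d(u,u)=0$. $G_\beta$ is the digraph on these $n$ vertices with edge set $\{uv : 0 < d(u,v) \leq \beta\}$, and $H_\beta$ is its spanning subgraph with edge set $\{uv : d(u,v) = \beta\}$. For $X \subseteq E(H_\beta)$, $t(X)$ is the number of vertices incident with exactly one edge of $X$. *)

From HB Require Import structures.
From mathcomp Require Import all_boot all_order all_algebra.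
Set Implicit Arguments. Unset Strict Implicit. Unset Printing Implicit Defensive.
Import Order.TTheory GRing.Theory Num.Theory.

(* Vertices of the circle are 'I_n, labelled 0,1,...,n-1 in clockwise order. *)

Definition cwoff (n : nat) (u v : 'I_n) : nat := (v + n - u) %% n.

Definition cw3 (n : nat) (u w v : 'I_n) : bool :=
  [&& u != w, w != v, u != v & cwoff u w < cwoff u v].

Definition cdist (n : nat) (u v : 'I_n) : nat :=
  if u == v then 0 else (#|[set w | cw3 u w v]|).+1.

Definition EH (n : nat) (beta : int) : {set 'I_n * 'I_n} :=
  [set e | Posz (cdist e.1 e.2) == beta].

Definition tX (n : nat) (X : {set 'I_n * 'I_n}) : nat :=
  #|[set v : 'I_n | #|[set e in X | (e.1 == v) || (e.2 == v)]| == 1]|.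

From HB Require Import structures.
From mathcomp Require Import all_boot all_order all_algebra zify ring lra.
Import Order.TTheory GRing.Theory Num.Theory.
Set Implicit Arguments. Unset Strict Implicit.

(* Write c := 8 beta - 3n, so that -2 <= c <= 2 and
     n (n - 2beta - 1)(2beta - n/2 + 1) = n^3/16 - n (c+4)^2/16;
   the claim thus reduces to  |X| c + t(X) <= n (c+4)^2 / 16.
   (1) Circle geometry: for a fixed tail u, d(u,.) is strictly increasing in
       the clockwise offset from u, and symmetrically for a fixed head; hence
       d(u,v) determines v from u and u from v.  So in H_beta (beta > 0) every
       vertex has out-degree <= 1 and in-degree <= 1, and there are no loops.
   (2) Degree counting in any loopless digraph X: the degrees sum to 2|X|, so
       t(X) <= 2|X|; if moreover every degree is <= 2, t(X) + 2|X| <= 2n.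
   (3) Arithmetic: the convex combination (2-c)/4 (2|X| - t) + (2+c)/4
       (2n - 2|X| - t) >= 0 gives |X| c + t <= n (2+c)/2, and
       n (2+c)/2 <= n (c+4)^2/16 is just n c^2 >= 0.
   The hypothesis n >= 4 is only used to see that beta > 0. *)

Section CircleGeometry.
Variable n : nat.
Implicit Types u v w : 'I_n.

Lemma cwoffE u v : cwoff u v = if (u <= v)%N then (v - u)%N else (v + n - u)%N.
Proof.
have hu := ltn_ord u; have hv := ltn_ord v.
rewrite /cwoff; case: leqP => h; last by rewrite modn_small //; lia.
have -> : (v + n - u = (v - u) + n)%N by lia.
by rewrite modnDr modn_small //; lia.
Qed.

Lemma cwoff_injr u v v' : cwoff u v = cwoff u v' -> v = v'.
Proof.
have := ltn_ord u; have := ltn_ord v; have := ltn_ord v' => ? ? ?.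
rewrite !cwoffE => e; apply: val_inj; move: e; do 2 case: leqP => ? /=; lia.
Qed.

Lemma cwoff_injl u u' v : cwoff u v = cwoff u' v -> u = u'.
Proof.
have := ltn_ord u; have := ltn_ord u'; have := ltn_ord v => ? ? ?.
rewrite !cwoffE => e; apply: val_inj; move: e; do 2 case: leqP => ? /=; lia.
Qed.

Lemma cwoff_arc u w v : (u != w) -> (w != v) ->
  (cwoff u w < cwoff u v)%N = (cwoff w v < cwoff u v)%N.
Proof.
have := ltn_ord u; have := ltn_ord w; have := ltn_ord v => ? ? ?.
rewrite -!val_eqE /= !cwoffE => ? ?.
case: (leqP u w) => ? /=; case: (leqP u v) => ? /=; case: (leqP w v) => ? /=; lia.
Qed.

Lemma cw3_tail u w v :
  cw3 u w v = [&& u != w, w != v, u != v & cwoff w v < cwoff u v]%N.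
Proof.
rewrite /cw3; case uw: (u != w); case wv: (w != v) => //=.
by rewrite cwoff_arc.
Qed.

(* d(u,.) is strictly increasing in the clockwise offset from u: the arc to
   the nearer head is strictly contained in the arc to the farther one. *)
Lemma cdist_mono_head u v v' : u != v -> u != v' ->
  (cwoff u v < cwoff u v')%N -> (cdist u v < cdist u v')%N.
Proof.
move=> uv uv' lt; rewrite /cdist (negbTE uv) (negbTE uv') ltnS.
apply: proper_card; apply/properP; split.
  apply/subsetP => w; rewrite !inE => /and4P[uw wv _ ltw].
  apply/and4P; split => //; last exact: ltn_trans ltw lt.
  by apply: contraTneq ltw => ->; rewrite -leqNgt ltnW.
exists v; rewrite !inE /cw3 ?eqxx ?andbF // uv uv' lt /= andbT.
by apply: contraTneq lt => ->; rewrite ltnn.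
Qed.

Lemma cdist_mono_tail u u' v : u != v -> u' != v ->
  (cwoff u v < cwoff u' v)%N -> (cdist u v < cdist u' v)%N.
Proof.
move=> uv u'v lt; rewrite /cdist (negbTE uv) (negbTE u'v) ltnS.
apply: proper_card; apply/properP; split.
  apply/subsetP => w; rewrite !inE !cw3_tail => /and4P[uw wv _ ltw].
  apply/and4P; split => //; last exact: ltn_trans ltw lt.
  by apply: contraTneq ltw => <-; rewrite -leqNgt ltnW.
exists u; rewrite !inE !cw3_tail ?eqxx ?andbF // uv u'v lt !andbT /=.
by apply: contraTneq lt => ->; rewrite ltnn.
Qed.

Lemma cdist_injr u v v' : u != v -> u != v' -> cdist u v = cdist u v' -> v = v'.
Proof.
move=> uv uv' e; apply: (@cwoff_injr u).
case: (ltngtP (cwoff u v) (cwoff u v')) => // lt.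
  by have := cdist_mono_head uv uv' lt; rewrite e ltnn.
by have := cdist_mono_head uv' uv lt; rewrite e ltnn.
Qed.

Lemma cdist_injl u u' v : u != v -> u' != v -> cdist u v = cdist u' v -> u = u'.
Proof.
move=> uv u'v e; apply: (@cwoff_injl _ _ v).
case: (ltngtP (cwoff u v) (cwoff u' v)) => // lt.
  by have := cdist_mono_tail uv u'v lt; rewrite e ltnn.
by have := cdist_mono_tail u'v uv lt; rewrite e ltnn.
Qed.
End CircleGeometry.

Section Degrees.
Variables (V : finType) (X : {set V * V}).

Definition outdeg (v : V) : nat := #|[set e in X | e.1 == v]|.
Definition indeg (v : V) : nat := #|[set e in X | e.2 == v]|.
Definition deg (v : V) : nat := #|[set e in X | (e.1 == v) || (e.2 == v)]|.

Lemma sum_fibres (f : V * V -> V) : \sum_v #|[set e in X | f e == v]| = #|X|.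
Proof.
rewrite -sum1_card (partition_big f xpredT) //=; apply: eq_bigr => v _.
by rewrite -sum1_card; apply: eq_bigl => e; rewrite !inE.
Qed.

Hypothesis loopless : forall e, e \in X -> e.1 != e.2.

(* Without loops, no edge is counted twice at a vertex. *)
Lemma degE v : deg v = outdeg v + indeg v.
Proof.
rewrite /deg /outdeg /indeg.
have -> : [set e in X | (e.1 == v) || (e.2 == v)] =
          [set e in X | e.1 == v] :|: [set e in X | e.2 == v].
  by apply/setP => e; rewrite !inE andb_orr.
rewrite cardsU.
suff -> : [set e in X | e.1 == v] :&: [set e in X | e.2 == v] = set0.
  by rewrite cards0 subn0.
apply/setP => e; rewrite !inE; apply/negbTE/negP.
move=> /andP[/andP[eX /eqP e1] /andP[_ /eqP e2]].
by move: (loopless eX); rewrite e1 e2 eqxx.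
Qed.

Lemma handshake : \sum_v deg v = 2 * #|X|.
Proof.
under eq_bigr do rewrite degE.
by rewrite big_split /= !sum_fibres mul2n addnn.
Qed.

Lemma pendant_le_edges : #|[set v | deg v == 1]| <= 2 * #|X|.
Proof.
rewrite -handshake -sum1_card big_mkcond /=; apply: leq_sum => v _.
by rewrite inE; case: eqP => [->|].
Qed.

(* With maximum degree 2, each vertex contributes at most 2 to t(X) + 2|X|. *)
Lemma pendant_edges_le_vertices : (forall v, deg v <= 2) ->
  #|[set v | deg v == 1]| + 2 * #|X| <= 2 * #|V|.
Proof.
move=> deg_le2; rewrite -handshake -sum1_card big_mkcond -big_split /=.
rewrite mulnC -sum_nat_const; apply: leq_sum => v _; rewrite inE.
by have := deg_le2 v; case: (deg v) => [|[|[|]]].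
Qed.
End Degrees.

Section HBetaDegrees.
Variables (n : nat) (beta : int) (X : {set 'I_n * 'I_n}).
Hypotheses (beta_gt0 : (0 < beta)%R) (XH : X \subset EH n beta).

Lemma cdist_edge e : e \in X -> Posz (cdist e.1 e.2) = beta.
Proof. by move/(subsetP XH); rewrite inE => /eqP. Qed.

Lemma HBeta_loopless e : e \in X -> e.1 != e.2.
Proof.
move=> eX; apply: contraTneq beta_gt0 => e12.
by rewrite -(cdist_edge eX) e12 /cdist eqxx.
Qed.

Lemma HBeta_outdeg v : outdeg X v <= 1.
Proof.
apply/card_le1_eqP => -[u w] [u' w']; rewrite !inE /=.
move=> /andP[eX /eqP eu] /andP[eX' /eqP eu'].
move: eX eX'; rewrite {}eu {}eu' => eX eX'.
congr (_, _); apply: cdist_injr (HBeta_loopless eX') (HBeta_loopless eX) _.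
by have := cdist_edge eX'; rewrite -(cdist_edge eX) => -[].
Qed.

Lemma HBeta_indeg v : indeg X v <= 1.
Proof.
apply/card_le1_eqP => -[u w] [u' w']; rewrite !inE /=.
move=> /andP[eX /eqP ew] /andP[eX' /eqP ew'].
move: eX eX'; rewrite {}ew {}ew' => eX eX'.
congr (_, _); apply: cdist_injl (HBeta_loopless eX') (HBeta_loopless eX) _.
by have := cdist_edge eX'; rewrite -(cdist_edge eX) => -[].
Qed.

Lemma HBeta_deg_le2 v : deg X v <= 2.
Proof.
rewrite degE; last exact: HBeta_loopless.
exact: leq_add (HBeta_outdeg v) (HBeta_indeg v).
Qed.
End HBetaDegrees.

Local Open Scope ring_scope.

(* The numerical core of the theorem, over any real field: x, t, m stand for
   |X|, t(X), n and b for beta. *)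
Lemma circle_bound (R : realFieldType) (x t m b : R) :
  0 <= m -> t <= 2 * x -> t + 2 * x <= 2 * m ->
  -2 <= 8 * b - 3 * m <= 2 ->
  x * (8 * b - 3 * m) + t + m * (m - 2 * b - 1) * (2 * b - m / 2 + 1) <= m ^+ 3 / 16.
Proof.
move=> m_ge0 tx txm /andP[cl cu].
set c := 8 * b - 3 * m in cl cu *.
have product : m * (m - 2 * b - 1) * (2 * b - m / 2 + 1) =
                m ^+ 3 / 16 - m * (c + 4) ^+ 2 / 16.
  by rewrite /c; field.
have linear : x * c + t <= m * (2 + c) / 2.
  have lo : 0 <= (2 - c) * (2 * x - t) by apply: mulr_ge0; lra.
  have hi : 0 <= (2 + c) * (2 * m - 2 * x - t) by apply: mulr_ge0; lra.
  nra.
have sq : 0 <= m * c ^+ 2 by rewrite mulr_ge0 ?sqr_ge0.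
rewrite product; nra.
Qed.

Theorem mainTheorem15 (n : nat) (beta : int) (X : {set 'I_n * 'I_n}) :
  (4 <= n)%N ->
  -2 <= 8 * beta - 3 * (n%:Z) <= 2 ->
  X \subset EH n beta ->
  (#|X|%:Q * (8 * beta%:~R - 3 * n%:Q) + (tX X)%:Q
     + n%:Q * (n%:Q - 2 * beta%:~R - 1) * (2 * beta%:~R - n%:Q / 2 + 1)
   <= n%:Q ^+ 3 / 16).
Proof.
move=> n_ge4 c_bounds XH.
have beta_gt0 : 0 < beta by case/andP: c_bounds; lia.
have loopless := HBeta_loopless beta_gt0 XH.
have t_le_edges : (tX X <= 2 * #|X|)%N := pendant_le_edges loopless.
have t_edges_le : (tX X + 2 * #|X| <= 2 * n)%N.
  rewrite -[n in (_ <= 2 * n)%N]card_ord.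
  exact: pendant_edges_le_vertices loopless (HBeta_deg_le2 beta_gt0 XH).
apply: circle_bound; first exact: ler0n.
- by rewrite -!pmulrn -natrM ler_nat.
- by rewrite -!pmulrn -!natrM -natrD ler_nat.
- by move: c_bounds; rewrite -!(ler_int rat) !(rmorphB, rmorphM, rmorphN).
Qed.
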